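(* Let $\varepsilon>0$, $b>0$, $r_c\ge 0$ with $r_c<b$, and $\omega>0$. Consider the matrix $$A=\begin{pmatrix} 0 & \omega^2 & 0 \\ -\omega^2 - \varepsilon \frac{r_c^2 - b^2}{(b^2 + r_c^2)^2} & 0 & 0\\ 0 & -\frac{\varepsilon b}{b^2 + r_c^2} & 0 \end{pmatrix},$$ which governs the linearized growth rates $\mu$ of perturbations $\delta e^{\mu t}(\alpha\cos\omega s,\beta\cos\omega s,\gamma\sin\omega s)$ of the straight-line solution $\mathbf{X}(s,t)=b\mathbf{e}_1 - \varepsilon\frac{b}{b^2+r_c^2} t\,\mathbf{e}_2 + s\mathbf{e}_3$ of the equation $\mathbf{X}_t = \frac{\mathbf{X}_s \wedge \mathbf{X}_{ss}}{|\mathbf{X}_s|^3} - \frac{\varepsilon x_1}{x_1^2 + r_c^2} \frac{\mathbf{X}_s\wedge \mathbf{e}_1 }{|\mathbf{X}_s|}$. Then $A$ has an eigenvalue with positive real part if and only if $$\omega < \frac{\sqrt{\varepsilon (b^2 - r_c^2)}}{b^2 + r_c^2},$$ equivalently, the wavelength $\lambda=2\pi/\omega$ satisfies $\lambda > \frac{2 \pi b}{\sqrt{\varepsilon}}\,\frac{1 + (r_c / b)^2}{\sqrt{1 - (r_c / b)^2}}$.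
   Context: $\mathbf{e}_1,\mathbf{e}_2,\mathbf{e}_3$ is the standard basis of $\mathbb{R}^3$, $\wedge$ is the cross product, $x_1$ is the first component of $\mathbf{X}$. Instability of the straight-line pair means some eigenvalue of $A$ has positive real part. *)

From HB Require Import structures.
From mathcomp Require Import all_boot all_order all_algebra.
From mathcomp Require Import complex.
From mathcomp Require Import reals trigo.
Set Implicit Arguments. Unset Strict Implicit. Unset Printing Implicit Defensive.
Import Order.TTheory GRing.Theory Num.Theory.
Local Open Scope ring_scope.

Definition Amat (R : realType) (eps b rc w : R) : 'M[R]_3 :=
  \matrix_(i < 3, j < 3)
    match nat_of_ord i, nat_of_ord j with
    | 0%N, 1%N => w ^+ 2
    | 1%N, 0%N => - w ^+ 2 - eps * (rc ^+ 2 - b ^+ 2) / (b ^+ 2 + rc ^+ 2) ^+ 2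
    | 2%N, 1%N => - (eps * b / (b ^+ 2 + rc ^+ 2))
    | _, _ => 0
    end.

Definition complex_eigenvalue (R : realType) (n : nat) (M : 'M[R]_n) (mu : R[i]) :=
  eigenvalue (map_mx (real_complex R) M) mu.

Definition unstable (R : realType) (n : nat) (M : 'M[R]_n) :=
  exists mu : R[i], complex_eigenvalue M mu /\ 0 < complex.Re mu.

(* A left eigenvector v of A for an eigenvalue mu <> 0 has v_2 = 0, and its
   first two coordinates then satisfy the 2x2 system [[0, w^2], [c, 0]], with
   c = A_10; so the nonzero eigenvalues of A are the square roots of w^2 c.
   One of them has positive real part iff w^2 c > 0, i.e. iff
   w^2 < eps (b^2 - rc^2) / (b^2 + rc^2)^2; the wavelength form is the same
   inequality after inversion. *)

From HB Require Import structures.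
From mathcomp Require Import all_boot all_order all_algebra.
From mathcomp Require Import complex.
From mathcomp Require Import reals trigo.
From mathcomp Require Import ring.
Set Implicit Arguments. Unset Strict Implicit.
Import Order.TTheory GRing.Theory Num.Theory.
Local Open Scope ring_scope.
Local Open Scope complex_scope.

Lemma ltr_sqr_sqrt (R : rcfType) (x y : R) : 0 <= x -> (x ^+ 2 < y) = (x < Num.sqrt y).
Proof.
move=> x_ge0; have [y_gt0|y_le0] := ltrP 0 y.
  by rewrite -ltr_sqrt // sqrtr_sqr ger0_norm.
have /eqP -> : Num.sqrt y == 0 by rewrite sqrtr_eq0.
by rewrite ltNge (le_trans y_le0) ?sqr_ge0 // ltNge x_ge0.
Qed.

Lemma sqrt_div_sqr (R : rcfType) (x y : R) : 0 <= y -> Num.sqrt (x / y ^+ 2) = Num.sqrt x / y.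
Proof.
move=> y_ge0; rewrite -exprVn mulrC sqrtrM ?sqr_ge0 // sqrtr_sqr.
by rewrite ger0_norm ?invr_ge0 // mulrC.
Qed.

Lemma sqr_complex_Re_gt0 (R : rcfType) (z : R[i]) (x : R) :
  z ^+ 2 = x%:C -> 0 < complex.Re z -> 0 < x.
Proof.
case: z => a b /eqP; rewrite expr2 eq_complex /= => /andP[/eqP <- /eqP ab0] a_gt0.
have /eqP -> : b == 0.
  move/eqP: ab0; rewrite mulrC -mulr2n -mulr_natr !mulf_eq0 pnatr_eq0 (gt_eqF a_gt0).
  by rewrite orbF => /orP[].
by rewrite mul0r subr0 mulr_gt0.
Qed.

Lemma row3_eq0 (K : zmodType) (v : 'rV[K]_3) :
  v 0 0 = 0 -> v 0 1 = 0 -> v 0 2 = 0 -> v = 0.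
Proof.
move=> v0 v1 v2; apply/rowP => -[[|[|[|k]]] hk] //; rewrite mxE.
- by rewrite -[RHS]v0; congr (v 0 _); apply: val_inj.
- by rewrite -[RHS]v1; congr (v 0 _); apply: val_inj.
- by rewrite -[RHS]v2; congr (v 0 _); apply: val_inj.
Qed.

Section Osc3.
Variables (R : realType) (p c d : R).

Definition osc3_mx : 'M[R]_3 :=
  \matrix_(i < 3, j < 3)
    match nat_of_ord i, nat_of_ord j with
    | 0%N, 1%N => p
    | 1%N, 0%N => c
    | 2%N, 1%N => d
    | _, _ => 0
    end.

Lemma mul_row_osc3_mx (v : 'rV[R[i]]_3) :
  v *m map_mx (real_complex R) osc3_mx =
  \row_(j < 3) [:: c%:C * v 0 1; p%:C * v 0 0 + d%:C * v 0 2; 0]`_j.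
Proof.
have ord0E : ord0 = 0 :> 'I_3 by apply: val_inj.
have lift1E : lift ord0 ord0 = 1 :> 'I_3 by apply: val_inj.
have lift2E : lift ord0 (lift ord0 ord0) = 2 :> 'I_3 by apply: val_inj.
apply/rowP => j; rewrite !mxE !big_ord_recl big_ord0 !mxE ord0E lift1E lift2E.
case: j => [[|[|[|j]]] hj] //=; rewrite !rmorph0 ?mulr0 ?addr0 ?add0r //.
- by rewrite mulrC.
- by rewrite mulrC [v 0 _ * _]mulrC.
Qed.

Lemma osc3_eigenvalue_sqr (mu : R[i]) :
  complex_eigenvalue osc3_mx mu -> mu != 0 -> mu ^+ 2 = (p * c)%:C.
Proof.
move=> /eigenvalueP[v]; rewrite mul_row_osc3_mx => /rowP eqv v_nz mu_nz.
move: (eqv 2) (eqv 0) (eqv 1); rewrite !mxE /= => /esym/eqP.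
rewrite mulf_eq0 (negbTE mu_nz) /= => /eqP v2 e0; rewrite v2 mulr0 addr0 => e1.
have sqr_v0 : (mu ^+ 2 - (p * c)%:C) * v 0 0 = 0.
  have -> : (mu ^+ 2 - (p * c)%:C) * v 0 0 =
      mu * (mu * v 0 0 - c%:C * v 0 1) + c%:C * (mu * v 0 1 - p%:C * v 0 0).
    by rewrite rmorphM; ring.
  by rewrite e0 e1 !subrr !mulr0 addr0.
have sqr_v1 : (mu ^+ 2 - (p * c)%:C) * v 0 1 = 0.
  have -> : (mu ^+ 2 - (p * c)%:C) * v 0 1 =
      mu * (mu * v 0 1 - p%:C * v 0 0) + p%:C * (mu * v 0 0 - c%:C * v 0 1).
    by rewrite rmorphM; ring.
  by rewrite e0 e1 !subrr !mulr0 addr0.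
apply/eqP; rewrite -subr_eq0; apply: contraNT v_nz => nz; apply/eqP/row3_eq0 => //.
- by apply: (mulfI nz); rewrite sqr_v0 mulr0.
- by apply: (mulfI nz); rewrite sqr_v1 mulr0.
Qed.

Lemma osc3_sqrt_eigenvalue (mu : R[i]) :
  p != 0 -> mu ^+ 2 = (p * c)%:C -> complex_eigenvalue osc3_mx mu.
Proof.
move=> p_nz mu2; apply/eigenvalueP; exists (\row_(j < 3) [:: mu; p%:C; 0]`_j).
  rewrite mul_row_osc3_mx; apply/rowP => -[[|[|[|j]]] hj]; rewrite !mxE //=.
  - by rewrite -expr2 mu2 rmorphM mulrC.
  - by rewrite mulr0 addr0 mulrC.
  - by rewrite mulr0.
by apply/eqP => /rowP /(_ 1); rewrite !mxE /= => /eqP; rewrite fmorph_eq0; exact/negP.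
Qed.

Lemma unstable_osc3 : p != 0 -> unstable osc3_mx <-> 0 < p * c.
Proof.
move=> p_nz; split=> [[mu [ev_mu Re_gt0]]|pc_gt0].
  have mu_nz : mu != 0 by apply: contraTneq Re_gt0 => ->; rewrite ltxx.
  exact: sqr_complex_Re_gt0 (osc3_eigenvalue_sqr ev_mu mu_nz) Re_gt0.
exists (Num.sqrt (p * c))%:C; split; last by rewrite /= sqrtr_gt0.
by apply: osc3_sqrt_eigenvalue; rewrite // -rmorphXn sqr_sqrtr ?ltW.
Qed.

End Osc3.

(* [Amat eps b rc w] is convertible to [osc3_mx (w ^+ 2) _ _]. *)
Lemma unstable_Amat (R : realType) (eps b rc w : R) : 0 < w ->
  unstable (Amat eps b rc w) <->
  w < Num.sqrt (eps * (b ^+ 2 - rc ^+ 2)) / (b ^+ 2 + rc ^+ 2).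
Proof.
move=> w_gt0; have w2_nz : w ^+ 2 != 0 by rewrite expf_eq0 gt_eqF.
apply: (iff_trans (unstable_osc3 _ _ w2_nz)).
have -> : - w ^+ 2 - eps * (rc ^+ 2 - b ^+ 2) / (b ^+ 2 + rc ^+ 2) ^+ 2
         = eps * (b ^+ 2 - rc ^+ 2) / (b ^+ 2 + rc ^+ 2) ^+ 2 - w ^+ 2 by ring.
rewrite pmulr_rgt0 ?exprn_gt0 // subr_gt0 ltr_sqr_sqrt ?ltW //.
by rewrite sqrt_div_sqr // addr_ge0 ?sqr_ge0.
Qed.

Lemma critical_wavelength (R : rcfType) (eps b rc : R) : 0 <= eps -> 0 < b ->
  b / Num.sqrt eps * ((1 + (rc / b) ^+ 2) / Num.sqrt (1 - (rc / b) ^+ 2)) =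
  (b ^+ 2 + rc ^+ 2) / Num.sqrt (eps * (b ^+ 2 - rc ^+ 2)).
Proof.
move=> eps_ge0 b_gt0; have b_nz : b != 0 by rewrite gt_eqF.
have -> : b ^+ 2 - rc ^+ 2 = b ^+ 2 * (1 - (rc / b) ^+ 2) by field.
rewrite sqrtrM // sqrtrM ?sqr_ge0 // sqrtr_sqr ger0_norm ?ltW // !invfM.
(* Opaque inverted roots keep [field] from asking for them to be nonzero. *)
set s := (Num.sqrt eps)^-1; set q := (Num.sqrt _)^-1.
by field.
Qed.

Theorem mainTheorem2 (R : realType) (eps b rc w : R) :
  0 < eps -> 0 < b -> 0 <= rc -> rc < b -> 0 < w ->
  (unstable (Amat eps b rc w) <->
     w < Num.sqrt (eps * (b ^+ 2 - rc ^+ 2)) / (b ^+ 2 + rc ^+ 2)) /\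
  (unstable (Amat eps b rc w) <->
     (2 * pi) / w >
       (2 * pi * b / Num.sqrt eps) *
       ((1 + (rc / b) ^+ 2) / Num.sqrt (1 - (rc / b) ^+ 2))).
Proof.
move=> eps_gt0 b_gt0 rc_ge0 rc_lt_b w_gt0.
have unstableE := unstable_Amat eps b rc w_gt0; split=> //.
apply: (iff_trans unstableE).
rewrite -2!(mulrA (2 * pi)) critical_wavelength ?ltW // -invf_div.
rewrite ltr_pM2l ?mulr_gt0 ?pi_gt0 //.
have crit_gt0 : 0 < (b ^+ 2 + rc ^+ 2) / Num.sqrt (eps * (b ^+ 2 - rc ^+ 2)).
  have S_gt0 : 0 < b ^+ 2 + rc ^+ 2 by rewrite ltr_wpDr ?sqr_ge0 ?exprn_gt0.
  by rewrite divr_gt0 ?sqrtr_gt0 ?mulr_gt0 // subr_gt0 ltr_pXn2r // nnegrE ltW.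
by rewrite -[w in w < _]invrK ltf_pV2 ?posrE ?invr_gt0.
Qed.
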